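(* Suppose Assumptions 1 and 2 hold, $U$ is concave, and $U'(0)$ exists. Let $U'_-$ denote the left derivative of $U$ (for $\lambda>0$; at $\lambda=0$ use $U'(0)$), and set $\epsilon_n(t,\lambda)=U'_-(\lambda)e^{-\alpha t}\frac{\bar c}{\alpha}(1-\epsilon+\epsilon e^{-\alpha\delta})^n$. Then for all $n\ge0$ and all $(t,i,\lambda)$, $$V_n(t,i,\lambda)\le V_\infty(t,i,\lambda)\le V_n(t,i,\lambda)+\epsilon_n(t,\lambda),$$ and also $0\le (T^n\bar v)(t,i,\lambda)-(T^nU)(t,i,\lambda)\le\epsilon_n(t,\lambda)$, where $\bar v(t,\lambda)=U(e^{-\alpha t}\bar c/\alpha+\lambda)$.
   Context: Semi-Markov decision model with countable $E$, admissible action sets $A(i)$, semi-Markov kernel $Q(\cdot,\cdot\mid i,a)$ (joint law of sojourn time and next state, $Q(0,j\mid i,a)=0$), measurable cost $C:K\to[0,\bar c]$ with $0<\bar c<\infty$, discount $\alpha>0$, utility $U:[0,\infty)\to\mathbb R$ continuous, strictly increasing. Augmented chain $(T_n,X_n,C_n)$ from $(t,i,\lambda)$: $(T_{k+1}-T_k,X_{k+1})\sim Q(\cdot,\cdot\mid X_k,A_k)$ given the past, $C_n=\lambda+\sum_{k<n}\frac{C(X_k,A_k)}{\alpha}(e^{-\alpha T_k}-e^{-\alpha T_{k+1}})$, $C_\infty=\lim C_n$. $V_n=\inf_\pi\mathbb E^\pi_{(t,i,\lambda)}[U(C_n)]$, $V_\infty=\inf_\pi\mathbb E^\pi_{(t,i,\lambda)}[U(C_\infty)]$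 (infima over all history-dependent policies). $T$ is the operator $Tv(t,i,\lambda)=\inf_{a\in A(i)}\sum_j\int v(t+s,j,\lambda+\frac{C(i,a)}{\alpha}(e^{-\alpha t}-e^{-\alpha(t+s)}))Q(ds,j\mid i,a)$, applied to $U$ viewed as $(t,i,\lambda)\mapsto U(\lambda)$ and to $\bar v$. Assumption 1: there exist $\delta,\epsilon>0$ with $\sup_{(i,a)}Q(\delta,E\mid i,a)\le1-\epsilon$. Assumption 2: $A(i)$ compact; $a\mapsto C(i,a)$ continuous; for each measurable $v$ with $U(\lambda)\le v(t,i,\lambda)\le U(e^{-\alpha t}\bar c/\alpha+\lambda)$ the map $a\mapsto\sum_j\int v(t+s,j,\lambda+\frac{C(i,a)}{\alpha}(e^{-\alpha t}-e^{-\alpha(t+s)}))Q(ds,j\mid i,a)$ is continuous on $A(i)$. *)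

From HB Require Import structures.
From mathcomp Require Import all_boot all_order all_algebra.
From mathcomp Require Import all_classical all_reals all_analysis measurable_realfun.
Set Implicit Arguments. Unset Strict Implicit. Unset Printing Implicit Defensive.
Import Order.TTheory GRing.Theory Num.Theory.
Import numFieldNormedType.Exports.
Local Open Scope classical_set_scope.
Local Open Scope ring_scope.

Definition discr (T : Type) : Type := T.
HB.instance Definition _ (T : pointedType) := Pointed.on (discr T).
HB.instance Definition _ (T : pointedType) :=
  @isMeasurable.Build default_measure_display (discr T)
    discrete_measurable discrete_measurable0
    (@discrete_measurableC T) (@discrete_measurableU T).

Definition borelT (T : ptopologicalType) := g_sigma_algebraType (@open T).


(* Augmented state (t, i, lambda), encoded as ((t, i), lambda). *)
Definition St (R : realType) (E : pointedType) := ((R * discr E) * R)%type.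

(* History at decision epoch k: ((x_0,a_0), ..., (x_{k-1},a_{k-1})) and x_k. *)
Definition hist (R : realType) (E : pointedType) (Act : ptopologicalType)
  (k : nat) := (k.-tuple (St R E * borelT Act) * St R E)%type.

Definition hist_ext (R : realType) (E : pointedType) (Act : ptopologicalType)
  k (h : hist R E Act k) (a : Act) (y : St R E) : hist R E Act k.+1 :=
  ([tuple of rcons h.1 (h.2, a)], y).

Definition policy (R : realType) (E : pointedType) (Act : ptopologicalType) :=
  forall k, hist R E Act k -> borelT Act.

Definition admissible_policy (R : realType) (E : pointedType)
  (Act : ptopologicalType) (A : E -> set Act) (f : policy R E Act) : Prop :=
  forall k, measurable_fun setT (f k) /\
            forall h : hist R E Act k, A h.2.1.2 (f k h).

Section model.
Variables (R : realType) (E : pointedType) (Act : ptopologicalType).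
Variables (A : E -> set Act)
  (Q : E -> Act -> {measure set (R * discr E)%type -> \bar R})
  (C : E -> Act -> R) (alpha : R) (U : R -> R).

Local Open Scope ereal_scope.

(* cost accumulated during a sojourn of length s started at time t *)
Definition cost_incr (i : E) (a : Act) (t s : R) : R :=
  (C i a / alpha * (expR (- alpha * t) - expR (- alpha * (t + s))))%R.

(* exp_val f N k h = E^f[ U(C_{k+N}) | h_k = h ]  (backward recursion) *)
Fixpoint exp_val (f : policy R E Act) (N : nat) :
    forall k, hist R E Act k -> \bar R :=
  match N with
  | 0 => fun k h => (U h.2.2)%:E
  | N.+1 => fun k h =>
      let t := h.2.1.1 in let i := h.2.1.2 in let l := h.2.2 in
      let a := f k h in
      \int[Q i a]_z exp_val f N
          (hist_ext h a ((t + z.1, z.2), l + cost_incr i a t z.1)%R)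
  end.

Definition init_hist (t : R) (i : E) (l : R) : hist R E Act 0 :=
  ([tuple], ((t, i), l)).

Definition EUCn (f : policy R E Act) (n : nat) (t : R) (i : E) (l : R) :=
  exp_val f n (init_hist t i l).

(* E^pi_{(t,i,lambda)} [U(C_oo)], as the monotone limit of E[U(C_n)] *)
Definition EUCinf (f : policy R E Act) (t : R) (i : E) (l : R) :=
  limn (fun n => EUCn f n t i l).

Definition V_n (n : nat) (t : R) (i : E) (l : R) : \bar R :=
  ereal_inf [set EUCn f n t i l | f in admissible_policy A].

Definition V_inf (t : R) (i : E) (l : R) : \bar R :=
  ereal_inf [set EUCinf f t i l | f in admissible_policy A].

Definition Top (v : R -> E -> R -> \bar R) : R -> E -> R -> \bar R :=
  fun t i l => ereal_inf [set \int[Q i a]_z v (t + z.1)%R z.2 (l + cost_incr i a t z.1)%R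
                          | a in A i].

End model.

Definition right_deriv0 (R : realType) (U : R -> R) : R :=
  lim ((fun h : R => (U h - U 0) / h) @ 0^'+).

Definition left_deriv (R : realType) (U : R -> R) (l : R) : R :=
  lim ((fun h : R => (U l - U (l - h)) / h) @ 0^'+).

Definition Uprime_minus (R : realType) (U : R -> R) (l : R) : R :=
  if 0 < l then left_deriv U l else right_deriv0 U.

Definition concave_on_nonneg (R : realType) (U : R -> R) : Prop :=
  forall x y th : R, 0 <= x -> 0 <= y -> 0 <= th <= 1 ->
    th * U x + (1 - th) * U y <= U (th * x + (1 - th) * y).

(* The cost still to come after time t is at most e^{-alpha t} cbar/alpha, so every
   value considered (E[U(C_n)], T^n U, T^n vbar) lies between U(l) and
   vbar(t, l) = U(l + e^{-alpha t} cbar/alpha), and concavity,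
   U(l + d) <= U(l) + U'_-(l) d, bounds the initial gap vbar - U by eps_0.  One
   transition with sojourn time s multiplies e^{-alpha t} by
   e^{-alpha s} <= e^{-alpha delta} + (1 - e^{-alpha delta}) 1_{s <= delta}, while U'_-
   can only decrease as cost accumulates; by Assumption 1 the expected factor is
   at most 1 - eps + eps e^{-alpha delta}.  The gap bound survives integration and
   infima over actions or policies, and E[U(C_n)] increases to E[U(C_oo)].

   No measurability is needed: the integral of a nonnegative function is the
   supremum of the integrals of the simple functions below it, and comparing
   integrals of bounded functions only uses this inner-integral description. *)

From HB Require Import structures.
From mathcomp Require Import all_boot all_order all_algebra.
From mathcomp Require Import all_classical all_reals all_analysis measurable_realfun.
From mathcomp Require Import ring lra.
Set Implicit Arguments.
Unset Strict Implicit.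
Unset Printing Implicit Defensive.
Import Order.TTheory GRing.Theory Num.Theory.
Import numFieldNormedType.Exports.
Local Open Scope classical_set_scope.
Local Open Scope ring_scope.

Section concave_utility.
Variables (R : realType) (U : R -> R).
Hypothesis U_concave : concave_on_nonneg U.

Definition slope (x y : R) := (U y - U x) / (y - x).

Lemma concave_chord a b c : 0 <= a -> a < b -> b < c ->
  (c - b) * U a + (b - a) * U c <= U b * (c - a).
Proof.
move=> a0 ab bc; have ca : 0 < c - a by lra.
have c0 : 0 <= c by lra.
have th01 : 0 <= (c - b) / (c - a) <= 1.
  by apply/andP; split; [apply: divr_ge0|rewrite ler_pdivrMr]; lra.
have := U_concave a0 c0 th01.
have -> : (c - b) / (c - a) * a + (1 - (c - b) / (c - a)) * c = b by field; lra.
rewrite -(ler_pM2r ca); congr (_ <= _); field; lra.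
Qed.

Lemma three_chord_left a b c : 0 <= a -> a < b -> b < c -> slope a c <= slope a b.
Proof.
move=> a0 ab bc; have := concave_chord a0 ab bc.
rewrite /slope ler_pdivrMr; last lra.
rewrite mulrAC ler_pdivlMr; last lra.
nra.
Qed.

Lemma three_chord_right a b c : 0 <= a -> a < b -> b < c -> slope b c <= slope a c.
Proof.
move=> a0 ab bc; have := concave_chord a0 ab bc.
rewrite /slope ler_pdivrMr; last lra.
rewrite mulrAC ler_pdivlMr; last lra.
nra.
Qed.

Lemma three_chord a b c : 0 <= a -> a < b -> b < c -> slope b c <= slope a b.
Proof.
by move=> a0 ab bc; exact: le_trans (three_chord_right a0 ab bc) (three_chord_left a0 ab bc).
Qed.

Lemma slope_left_diff l h : slope (l - h) l = (U l - U (l - h)) / h.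
Proof. by rewrite /slope; congr (_ / _); ring. Qed.

Lemma left_deriv_cvg l : 0 < l -> cvg ((fun h : R => (U l - U (l - h)) / h) @ 0^'+).
Proof.
move=> l0; have lt_l : \forall x \near 0^'+, x < l by exact: nbhs_right_lt.
apply: nondecreasing_at_right_is_cvgr.
- apply: filterS lt_l => x xl y z; rewrite !in_itv /= => /andP[y0 yx] /andP[z0 zx] yz.
  have [->|yz'] := eqVneq y z; first by [].
  rewrite -!slope_left_diff; apply: three_chord_right; rewrite ?lt_neqAle ?yz' //; lra.
- apply: filterS lt_l => x xl; exists (slope l (l + 1)) => _ [y yin <-].
  move: yin; rewrite /= in_itv /= => /andP[y0 yx].
  by rewrite -slope_left_diff; apply: three_chord; lra.
Qed.

Hypothesis U_right_deriv0 : cvg ((fun h : R => (U h - U 0) / h) @ 0^'+).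

Lemma slope_le_Uprime_minus l d : 0 <= l -> 0 < d -> slope l (l + d) <= Uprime_minus U l.
Proof.
move=> l0 d0; rewrite /Uprime_minus.
have [lp|lp] := ltP 0 l.
- apply: limr_ge; first exact: left_deriv_cvg.
  near=> h.
  have h0 : 0 < h by near: h; exact: nbhs_right_gt.
  have hl : h < l by near: h; exact: nbhs_right_lt.
  by rewrite -slope_left_diff; apply: three_chord; lra.
- have -> : l = 0 by lra.
  apply: limr_ge; first exact: U_right_deriv0.
  near=> h.
  have h0 : 0 < h by near: h; exact: nbhs_right_gt.
  have hd : h < d by near: h; exact: nbhs_right_lt.
  have := @three_chord_left 0 h d; rewrite /slope !subr0 add0r; apply; lra.
Unshelve. all: by end_near.
Qed.

Lemma Uprime_minus_le_slope x y : 0 <= x -> x < y -> Uprime_minus U y <= slope x y.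
Proof.
move=> x0 xy; rewrite /Uprime_minus ifT; last lra.
apply: limr_le; first by apply: left_deriv_cvg; lra.
near=> h.
have h0 : 0 < h by near: h; exact: nbhs_right_gt.
have hl : h < y - x by near: h; apply: nbhs_right_lt; lra.
by rewrite -slope_left_diff; apply: three_chord_right; lra.
Unshelve. all: by end_near.
Qed.

Lemma Uprime_minus_nonincreasing x y : 0 <= x -> x <= y ->
  Uprime_minus U y <= Uprime_minus U x.
Proof.
move=> x0; rewrite le_eqVlt => /predU1P[-> //|xy].
apply: le_trans (Uprime_minus_le_slope x0 xy) _.
have := @slope_le_Uprime_minus x (y - x) x0; rewrite subrKC; apply; lra.
Qed.

Lemma concave_le_tangent l d : 0 <= l -> 0 <= d -> U (l + d) <= U l + Uprime_minus U l * d.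
Proof.
move=> l0; rewrite le_eqVlt => /predU1P[<-|d0]; first by rewrite mulr0 !addr0.
have := slope_le_Uprime_minus l0 d0.
rewrite /slope [_ + _ - l]addrC addKr ler_pdivrMr //; lra.
Qed.

Hypothesis U_increasing : {in `[0, +oo[ &, {mono U : x y / x < y}}.

Lemma U_nondecreasing x y : 0 <= x -> x <= y -> U x <= U y.
Proof.
move=> x0; rewrite le_eqVlt => /predU1P[-> //|xy].
by apply: ltW; rewrite U_increasing ?in_itv /= ?andbT //; lra.
Qed.

Lemma Uprime_minus_ge0 l : 0 <= l -> 0 <= Uprime_minus U l.
Proof.
move=> l0; apply: le_trans (slope_le_Uprime_minus l0 ltr01).
rewrite /slope [_ + _ - l]addrC addKr divr1 subr_ge0 ltW // U_increasing ?in_itv /=; lra.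
Qed.

End concave_utility.

Section integral_without_measurability.
Local Open Scope ereal_scope.
Context d (T : measurableType d) (R : realType) (mu : {measure set T -> \bar R}).
Import HBNNSimple.

Lemma ge0_le_integral_nonmeasurable (X Y : T -> \bar R) :
  (forall x, 0 <= X x) -> (forall x, X x <= Y x) -> \int[mu]_x X x <= \int[mu]_x Y x.
Proof.
move=> X0 XY; have Y0 x : 0 <= Y x by exact: le_trans (X0 x) (XY x).
rewrite (ge0_integralTE _ X0) (ge0_integralTE _ Y0).
apply: ereal_sup_le => _ [h hX <-]; exists h => //= x.
exact: le_trans (hX x) (XY x).
Qed.

Lemma le_maxe0_pos (a : R) (y : \bar R) : a%:E <= maxe y 0 -> (0 < a)%R -> a%:E <= y.
Proof.
move=> + a0; rewrite le_max => /orP[//|]; rewrite lee_fin => a0'.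
by exfalso; move: a0'; rewrite leNgt a0.
Qed.

Lemma le_posneg_split (f g : \bar R) (p q c x r : R) :
  (0 <= p)%R -> (0 <= q)%R -> (0 <= c)%R -> (0 <= x)%R -> (0 <= r)%R ->
  p%:E <= maxe f 0 -> q%:E <= maxe (- g) 0 -> f <= g + r%:E ->
  (p - r <= c)%R -> (q - r <= x)%R -> (p + q <= c + x + r)%R.
Proof.
move=> p0 q0 c0 x0 r0 pf qg fg pc qx.
have [->|p_neq0] := eqVneq p 0%R; first lra.
have [->|q_neq0] := eqVneq q 0%R; first lra.
have /le_maxe0_pos pf' := pf; have /le_maxe0_pos qg' := qg.
have : p%:E <= (- q + r)%:E.
  rewrite EFinD EFinN; apply: le_trans (pf' _) (le_trans fg _).
    by rewrite lt_neqAle eq_sym p_neq0.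
  by rewrite leeD2r // leeNr qg' // lt_neqAle eq_sym q_neq0.
rewrite lee_fin; lra.
Qed.

Lemma ge0_integralD_EFin (f g : T -> R) : measurable_fun setT f -> measurable_fun setT g ->
  (forall x, 0 <= f x)%R -> (forall x, 0 <= g x)%R ->
  \int[mu]_x (f x + g x)%:E = \int[mu]_x (f x)%:E + \int[mu]_x (g x)%:E.
Proof.
move=> mf mg f0 g0; under eq_integral do rewrite EFinD.
by apply: ge0_integralD => //; (move=> x _; rewrite lee_fin) || exact/measurable_EFinP.
Qed.

Variables (N : set T) (D : T -> R).
Hypotheses (mN : measurable N) (muN : mu N = 0).
Hypotheses (mD : measurable_fun setT D) (D_ge0 : forall x, (0 <= D x)%R).

Lemma funepos_dominated_sub (F G : T -> \bar R) (phi : T -> R) :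
  (forall x, ~ N x -> F x <= G x + (D x)%:E) -> (forall x, (phi x)%:E <= F^\+ x) ->
  measurable_fun setT phi ->
  exists chi : T -> R, [/\ measurable_fun setT chi, forall x, (0 <= chi x)%R,
    forall x, (chi x)%:E <= G^\+ x & forall x, ~ N x -> (phi x - D x <= chi x)%R].
Proof.
move=> FG phiF mphi; exists ((phi \- D)^\+ \* \1_(~` N))%R; split.
- apply: measurable_funM; last exact/measurable_indic/measurableC.
  exact/measurable_funrpos/measurable_funB.
- by move=> x; rewrite /= mulr_ge0 // indicE ler0n.
- move=> x; rewrite /= indicE.
  have [xN|_] := boolP (x \in ~` N); last by rewrite mulr0 funepos_ge0.
  rewrite mulr1 /funrpos; have [le0|gt0] := leP (phi x - D x)%R 0%R.
    exact: funepos_ge0.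
  have phi0 : (0 < phi x)%R by have := D_ge0 x; lra.
  have phiF' : (phi x)%:E <= F x by move: (phiF x); rewrite funeposE => /le_maxe0_pos; apply.
  rewrite funeposE le_max EFinB leeBlDr //; apply/orP; left.
  by apply: le_trans phiF' (FG x _); move: xN; rewrite inE.
- by move=> x nN; rewrite /= indicE mem_set // mulr1 /funrpos le_max lexx.
Qed.

Lemma sintegral_funepos_funeneg_le (F G : T -> \bar R) (phi psi : {nnsfun T >-> R}) :
  (forall x, ~ N x -> F x <= G x + (D x)%:E) ->
  (forall x, (phi x)%:E <= F^\+ x) -> (forall x, (psi x)%:E <= G^\- x) ->
  sintegral mu phi + sintegral mu psi <=
    \int[mu]_x G^\+ x + \int[mu]_x F^\- x + \int[mu]_x (D x)%:E.
Proof.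
move=> FG phiF psiG.
have [chi [mchi chi0 chiG chi_ge]] := funepos_dominated_sub FG phiF (measurable_funPT phi).
have GF x : ~ N x -> - G x <= - F x + (D x)%:E.
  by move=> nN; rewrite leeNl addeC oppeD // oppeK addeC leeBlDr //; exact: FG.
have [xi [mxi xi0 xiF xi_ge]] : exists xi : T -> R, [/\ measurable_fun setT xi,
    forall x, (0 <= xi x)%R, forall x, (xi x)%:E <= F^\- x &
    forall x, ~ N x -> (psi x - D x <= xi x)%R].
  by rewrite -funeposN; apply: funepos_dominated_sub GF _ _; rewrite ?funeposN.
have sum_le x : ~ N x -> (phi x + psi x <= chi x + xi x + D x)%R.
  move=> nN; apply: le_posneg_split (FG x nN) (chi_ge x nN) (xi_ge x nN) => //.
  - by rewrite -funeposE.
  - by rewrite -funenegE.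
have chixi0 x : (0 <= chi x + xi x)%R by rewrite addr_ge0.
have mchixi := measurable_funD mchi mxi.
apply: (@le_trans _ _ (\int[mu]_x (chi x + xi x + D x)%:E)).
  rewrite -!integralT_nnsfun -ge0_integralD_EFin //.
  apply: ae_ge0_le_integral => //; try (by move=> x _; rewrite lee_fin addr_ge0).
  - exact/measurable_EFinP/measurable_funD.
  - exact/measurable_EFinP/measurable_funD.
  - exists N; split => //= x /= nP; have [//|Nx] := pselect (N x).
    by exfalso; apply: nP => _; rewrite lee_fin; exact: sum_le.
rewrite !ge0_integralD_EFin // leeD2r // leeD // ge0_le_integral_nonmeasurable //.
all: by move=> x; rewrite lee_fin.
Qed.

Hypothesis mu1 : mu setT = 1.

Lemma ge0_integral_le_cst (X : T -> \bar R) (c : R) : (0 <= c)%R ->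
  (forall x, 0 <= X x) -> (forall x, ~ N x -> X x <= c%:E) -> \int[mu]_x X x <= c%:E.
Proof.
move=> c0 X0 Xc; rewrite (ge0_integralTE _ X0).
apply: ge_ereal_sup => _ [h hX <-]; rewrite -integralT_nnsfun.
have <- : \int[mu]_x (cst c%:E x) = c%:E by rewrite integral_cst // mu1 mule1.
apply: ae_ge0_le_integral => //.
- by move=> x _; rewrite lee_fin.
- exact/measurable_EFinP.
- exists N; split => //= x /= nP; have [//|Nx] := pselect (N x).
  by exfalso; apply: nP => _; exact: le_trans (hX x) (Xc x Nx).
Qed.

Lemma bounded_integral_funeposneg_fin_num (F : T -> \bar R) (m M : R) :
  (forall x, ~ N x -> m%:E <= F x <= M%:E) ->
  \int[mu]_x F^\+ x \is a fin_num /\ \int[mu]_x F^\- x \is a fin_num.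
Proof.
move=> Fb.
have fin (X : T -> \bar R) (c : R) : (forall x, 0 <= X x) ->
    (forall x, ~ N x -> X x <= (Num.max c 0)%:E) -> \int[mu]_x X x \is a fin_num.
  move=> X0 Xc; rewrite ge0_fin_numE ?integral_ge0 //.
  by apply: le_lt_trans (ge0_integral_le_cst _ X0 Xc) (ltry _); rewrite le_max lexx orbT.
split; [apply: (fin _ M (funepos_ge0 F))|apply: (fin _ (- m)%R (funeneg_ge0 F))].
- move=> x /Fb /andP[_ FM]; rewrite funeposE EFin_max.
  by rewrite le_max2 // lexx.
- move=> x /Fb /andP[mF _]; rewrite funenegE EFin_max.
  by rewrite le_max2 // ?EFinN ?leeN2 // lexx.
Qed.

Lemma integral_le_integral_add (F G : T -> \bar R) (mF MF mG MG : R) :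
  (forall x, ~ N x -> F x <= G x + (D x)%:E) ->
  (forall x, ~ N x -> mF%:E <= F x <= MF%:E) ->
  (forall x, ~ N x -> mG%:E <= G x <= MG%:E) ->
  \int[mu]_x (D x)%:E \is a fin_num ->
  \int[mu]_x F x <= \int[mu]_x G x + \int[mu]_x (D x)%:E.
Proof.
move=> FG /bounded_integral_funeposneg_fin_num[Fp Fn].
move=> /bounded_integral_funeposneg_fin_num[Gp Gn] Dfin.
have sfin (phi : {nnsfun T >-> R}) : (forall x, (phi x)%:E <= F^\+ x) ->
    sintegral mu phi \is a fin_num.
  move=> phiF; rewrite ge0_fin_numE ?sintegral_ge0 //.
  apply: (@le_lt_trans _ _ (\int[mu]_x F^\+ x)); last by rewrite ltey_eq Fp.
  rewrite -integralT_nnsfun.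
  by apply: ge0_le_integral_nonmeasurable => // x; rewrite lee_fin.
have : \int[mu]_x F^\+ x + \int[mu]_x G^\- x <=
    \int[mu]_x G^\+ x + \int[mu]_x F^\- x + \int[mu]_x (D x)%:E.
  rewrite -leeBrDr // (ge0_integralTE _ (funepos_ge0 F)).
  apply: ge_ereal_sup => _ [phi phiF <-].
  rewrite leeBrDr // -leeBrDl ?sfin // (ge0_integralTE _ (funeneg_ge0 G)).
  apply: ge_ereal_sup => _ [psi psiG <-].
  by rewrite leeBrDl ?sfin //; exact: sintegral_funepos_funeneg_le.
move=> H; rewrite integralE [X in _ <= X + _]integralE; move: H.
move: Fp Fn Gp Gn Dfin => /fineK <- /fineK <- /fineK <- /fineK <- /fineK <-.
rewrite -!EFinN -!EFinD !lee_fin; lra.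
Qed.

End integral_without_measurability.

Section bounded_integrals.
Local Open Scope ereal_scope.
Context d (T : measurableType d) (R : realType) (mu : {measure set T -> \bar R}).
Hypothesis mu1 : mu setT = 1.
Variable N : set T.
Hypotheses (mN : measurable N) (muN : mu N = 0).

Lemma le_integral_bounded_ae (F G : T -> \bar R) (mF MF mG MG : R) :
  (forall x, ~ N x -> F x <= G x) ->
  (forall x, ~ N x -> mF%:E <= F x <= MF%:E) ->
  (forall x, ~ N x -> mG%:E <= G x <= MG%:E) ->
  \int[mu]_x F x <= \int[mu]_x G x.
Proof.
move=> FG Fb Gb.
have := @integral_le_integral_add _ _ _ mu N (cst 0%R) mN muN (measurable_cst _)
  (fun=> lexx 0%R) mu1 F G mF MF mG MG.
rewrite integral0 adde0; apply=> // x nN; rewrite adde0; exact: FG.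
Qed.

Lemma integral_bounded_ae (F : T -> \bar R) (m M : R) :
  (forall x, ~ N x -> m%:E <= F x <= M%:E) -> m%:E <= \int[mu]_x F x <= M%:E.
Proof.
move=> Fb; have cst_int (c : R) : \int[mu]_x (cst c%:E x) = c%:E.
  by rewrite integral_cst // mu1 mule1.
apply/andP; split; [rewrite -[leLHS]cst_int|rewrite -[leRHS]cst_int].
- apply: (le_integral_bounded_ae (mF := m) (MF := m) (mG := m) (MG := M));
  by move=> x nN; have /andP[mF FM] := Fb x nN; rewrite /= ?lexx ?mF ?FM.
- apply: (le_integral_bounded_ae (mF := m) (MF := M) (mG := M) (MG := M));
  by move=> x nN; have /andP[mF FM] := Fb x nN; rewrite /= ?lexx ?mF ?FM.
Qed.

Lemma integral_le_add_indic (S : set T) (F G : T -> \bar R) (a b p mF MF mG MG : R) :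
  measurable S -> mu S <= p%:E -> (0 <= a)%R -> (0 <= b)%R ->
  (forall x, ~ N x -> F x <= G x + (a + b * \1_S x)%:E) ->
  (forall x, ~ N x -> mF%:E <= F x <= MF%:E) ->
  (forall x, ~ N x -> mG%:E <= G x <= MG%:E) ->
  \int[mu]_x F x <= \int[mu]_x G x + (a + b * p)%:E.
Proof.
move=> mS muS a0 b0 FG Fb Gb.
have mD : measurable_fun setT (fun x => a + b * \1_S x)%R.
  by apply/measurable_funD/measurable_funM => //; exact: measurable_indic.
have D0 x : (0 <= a + b * \1_S x)%R by rewrite addr_ge0 // mulr_ge0 // indicE ler0n.
have Dint : \int[mu]_x (a + b * \1_S x)%:E = a%:E + b%:E * mu S.
  rewrite ge0_integralD_EFin //; last 2 first.
  - by apply: measurable_funM => //; exact: measurable_indic.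
  - by move=> x; rewrite mulr_ge0 // indicE ler0n.
  rewrite integral_cst // mu1 mule1.
  under eq_integral do rewrite EFinM.
  rewrite ge0_integralZl_EFin //; last exact/measurable_EFinP/measurable_indic.
  by rewrite integral_indic // setIT.
have muS0 : 0 <= mu S by [].
have Dfin : \int[mu]_x (a + b * \1_S x)%:E \is a fin_num.
  by rewrite Dint fin_numD fin_numM // ge0_fin_numE // (le_lt_trans muS) ?ltry.
apply: le_trans (integral_le_integral_add mN muN mD D0 mu1 FG Fb Gb Dfin) _.
by rewrite leeD2l // Dint EFinD leeD2l // EFinM lee_pmul.
Qed.

End bounded_integrals.

Section sandwich.
Local Open Scope ereal_scope.
Variable R : realType.

Definition sandwich (lo hi : \bar R) (e : R) (x y : \bar R) : Prop :=
  [/\ lo <= x, x <= y, y <= hi & y <= x + e%:E].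

Lemma sandwich_sub (lo hi : R) (e : R) (x y : \bar R) :
  sandwich lo%:E hi%:E e x y -> 0 <= y - x <= e%:E.
Proof.
case=> lox xy yhi yxe.
have xfin : x \is a fin_num.
  by rewrite fin_numElt (lt_le_trans (ltNyr lo) lox) (le_lt_trans (le_trans xy yhi) (ltry hi)).
apply/andP; split; last by rewrite leeBlDr // addeC.
by rewrite sube_ge0 ?xfin.
Qed.

Lemma ereal_inf_shift (I : Type) (X : set I) (f g : I -> \bar R) (e : R) :
  (forall a, X a -> f a <= g a <= f a + e%:E) ->
  ereal_inf (f @` X) <= ereal_inf (g @` X) <= ereal_inf (f @` X) + e%:E.
Proof.
move=> fg; apply/andP; split.
  apply: le_ereal_inf_tmp => _ [a Xa <-]; case/andP: (fg a Xa) => + _.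
  by apply: le_trans; apply: ereal_inf_lbound; exists a.
rewrite -leeBlDr //; apply: le_ereal_inf_tmp => _ [a Xa <-]; rewrite leeBlDr //.
case/andP: (fg a Xa) => _; apply: le_trans.
by apply: ereal_inf_lbound; exists a.
Qed.

Lemma sandwich_ereal_inf (I : Type) (X : set I) (f g : I -> \bar R) lo hi e :
  X !=set0 -> (forall a, X a -> sandwich lo hi e (f a) (g a)) ->
  sandwich lo hi e (ereal_inf (f @` X)) (ereal_inf (g @` X)).
Proof.
move=> [a0 Xa0] fg.
have /andP[infle infle_e] : ereal_inf (f @` X) <= ereal_inf (g @` X) <= ereal_inf (f @` X) + e%:E.
  by apply: ereal_inf_shift => a /fg[_ -> _ ->].
split => //.
- by apply: le_ereal_inf_tmp => _ [a Xa <-]; case: (fg a Xa).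
- by case: (fg a0 Xa0) => _ _ + _; apply: le_trans; apply: ereal_inf_lbound; exists a0.
Qed.

Lemma limn_nondecreasing_shift (u : (\bar R)^nat) (n : nat) (e : \bar R) :
  nondecreasing_seq u -> 0 <= e -> (forall p, u (n + p)%N <= u n + e) ->
  u n <= limn u <= u n + e.
Proof.
move=> nd e0 ue; rewrite (cvg_lim _ (ereal_nondecreasing_cvgn nd)) //.
apply/andP; split; first by apply: ereal_sup_ubound; exists n.
apply: ge_ereal_sup => _ [m _ <-]; have [nm|mn] := leqP n m.
  by rewrite -(subnKC nm); exact: ue.
by apply: le_trans (nd _ _ (ltnW mn)) _; rewrite leeDl.
Qed.

End sandwich.

Section model.
Variables (R : realType) (E : pointedType) (Act : ptopologicalType)
  (A : E -> set Act) (Q : E -> Act -> {measure set (R * discr E)%type -> \bar R})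
  (C : E -> Act -> R) (cbar alpha : R) (U : R -> R) (delta eps : R).
Hypothesis A_neq0 : forall i, A i !=set0.
Hypothesis Q_setT : forall i a, A i a -> Q i a setT = 1%E.
Hypothesis Q_sojourn0 : forall i a, A i a -> Q i a ([set s : R | s <= 0] `*` setT) = 0%E.
Hypothesis cbar_gt0 : 0 < cbar.
Hypothesis C_bounds : forall i a, A i a -> 0 <= C i a <= cbar.
Hypothesis alpha_gt0 : 0 < alpha.
Hypothesis U_increasing : {in `[0, +oo[ &, {mono U : x y / x < y}}.
Hypotheses (delta_gt0 : 0 < delta) (eps_gt0 : 0 < eps).
Hypothesis Q_short_sojourn : forall i a, A i a ->
  (Q i a ([set s : R | (s <= delta)%R] `*` setT) <= (1 - eps)%:E)%E.
Hypothesis U_concave : concave_on_nonneg U.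
Hypothesis U_right_deriv0 : cvg ((fun h : R => (U h - U 0) / h) @ 0^'+).

Definition max_cost (t l : R) := expR (- alpha * t) * cbar / alpha + l.
Definition Ubar (t l : R) := U (max_cost t l).
Definition contraction := 1 - eps + eps * expR (- alpha * delta).
Definition eps_n (n : nat) (t l : R) :=
  Uprime_minus U l * expR (- alpha * t) * (cbar / alpha) * contraction ^+ n.

Let instant := [set s : R | s <= 0] `*` [set: discr E].
Let short := [set s : R | s <= delta] `*` [set: discr E].

Lemma measurable_sojourn_le (c : R) :
  measurable ([set s : R | s <= c] `*` [set: discr E]).
Proof.
by apply: measurableX => //; rewrite (_ : [set s | s <= c] = [set` `]-oo, c]]) //.
Qed.

Lemma sojourn_gt0 (z : R * discr E) : ~ instant z -> 0 < z.1.
Proof. by move=> nz; rewrite ltNge; apply/negP => z0; apply: nz. Qed.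

Lemma eps_le1 : eps <= 1.
Proof.
have [a Aa] := A_neq0 point.
have := le_trans (measure_ge0 _ _) (Q_short_sojourn Aa); rewrite lee_fin; lra.
Qed.

Lemma contraction_ge0 : 0 <= contraction.
Proof.
have := mulr_gt0 eps_gt0 (expR_gt0 (- alpha * delta)); have := eps_le1.
rewrite /contraction; lra.
Qed.

Lemma cost_incr_ge0 i a t s : A i a -> 0 <= s -> 0 <= cost_incr C alpha i a t s.
Proof.
move=> Aa s0; have /andP[C0 _] := C_bounds Aa.
apply: mulr_ge0; first by rewrite divr_ge0 // ltW.
by rewrite subr_ge0 ler_expR; have := mulr_ge0 (ltW alpha_gt0) s0; lra.
Qed.

Lemma discounted_cbar_ge0 t : 0 <= expR (- alpha * t) * cbar / alpha.
Proof. by rewrite divr_ge0 ?mulr_ge0 ?expR_ge0 // ltW. Qed.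

Lemma max_cost_ge0 t l : 0 <= l -> 0 <= max_cost t l.
Proof. by move=> l0; rewrite addr_ge0 ?discounted_cbar_ge0. Qed.

Lemma max_cost_succ i a t l s : A i a -> 0 <= s ->
  max_cost (t + s) (l + cost_incr C alpha i a t s) <= max_cost t l.
Proof.
move=> Aa s0; have /andP[_ CC] := C_bounds Aa.
have e_le : expR (- alpha * (t + s)) <= expR (- alpha * t).
  by rewrite ler_expR; have := mulr_ge0 (ltW alpha_gt0) s0; lra.
have ia : 0 < alpha^-1 by rewrite invr_gt0.
have h1 : 0 <= cbar - C i a by lra.
have h2 : 0 <= expR (- alpha * t) - expR (- alpha * (t + s)) by lra.
have := mulr_ge0 (mulr_ge0 h1 (ltW ia)) h2.
rewrite /max_cost /cost_incr; nra.
Qed.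

Let ed := expR (- alpha * delta).
Local Notation next_cost i a t l z := (l + cost_incr C alpha i a t z.1)%R.

Lemma cbar_alpha_ge0 : 0 <= cbar / alpha.
Proof. by rewrite divr_ge0 // ltW. Qed.

Lemma eps_n_ge0 n t l : 0 <= l -> 0 <= eps_n n t l.
Proof.
move=> l0; apply: mulr_ge0; last exact/exprn_ge0/contraction_ge0.
by rewrite mulr_ge0 ?cbar_alpha_ge0 // mulr_ge0 ?expR_ge0 // Uprime_minus_ge0.
Qed.

Lemma eps_n_S n t l :
  eps_n n t l * ed + eps_n n t l * (1 - ed) * (1 - eps) = eps_n n.+1 t l.
Proof. by rewrite /eps_n /contraction /ed exprSr; ring. Qed.

Lemma eps_n_succ n t l l' (z : R * discr E) : 0 <= l -> l <= l' -> 0 < z.1 ->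
  eps_n n (t + z.1) l' <= eps_n n t l * ed + eps_n n t l * (1 - ed) * \1_short z.
Proof.
move=> l0 ll' z0.
have e_step : expR (- alpha * z.1) <= ed + (1 - ed) * \1_short z.
  rewrite indicE; have [zd|zd] := leP z.1 delta.
    rewrite mem_set //= mulr1 addrC subrK expR_le1; have := mulr_gt0 alpha_gt0 z0; lra.
  rewrite memNset /=; last by case => /=; lra.
  have : alpha * delta < alpha * z.1 by rewrite ltr_pM2l.
  by rewrite mulr0 addr0 ler_expR; lra.
have P0 : 0 <= expR (- alpha * t) * (cbar / alpha) * contraction ^+ n.
  by rewrite mulr_ge0 ?exprn_ge0 ?contraction_ge0 // mulr_ge0 ?expR_ge0 ?cbar_alpha_ge0.
have -> : eps_n n (t + z.1) l' = Uprime_minus U l' * expR (- alpha * z.1) *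
    (expR (- alpha * t) * (cbar / alpha) * contraction ^+ n).
  by rewrite /eps_n mulrDr expRD; ring.
have -> : eps_n n t l * ed + eps_n n t l * (1 - ed) * \1_short z =
    Uprime_minus U l * (ed + (1 - ed) * \1_short z) *
    (expR (- alpha * t) * (cbar / alpha) * contraction ^+ n).
  by rewrite /eps_n; ring.
rewrite ler_wpM2r // ler_pM ?expR_ge0 //; first exact/Uprime_minus_ge0/(le_trans l0 ll').
exact: Uprime_minus_nonincreasing.
Qed.

Lemma U_le_Ubar t l : 0 <= l -> U l <= Ubar t l.
Proof.
move=> l0; apply: (U_nondecreasing U_increasing) => //.
by rewrite /max_cost lerDr discounted_cbar_ge0.
Qed.

Lemma value_range_succ i a t l (z : R * discr E) (x : \bar R) :
  A i a -> 0 <= l -> ~ instant z ->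
  ((U (next_cost i a t l z))%:E <= x <= (Ubar (t + z.1) (next_cost i a t l z))%:E)%E ->
  ((U l)%:E <= x <= (Ubar t l)%:E)%E.
Proof.
move=> Aa l0 nz /andP[Ux xU]; have z0 := ltW (sojourn_gt0 nz).
have c0 := cost_incr_ge0 t Aa z0.
apply/andP; split.
  by apply: le_trans Ux; rewrite lee_fin U_nondecreasing // lerDl.
apply: le_trans xU _; rewrite lee_fin /Ubar; apply: (U_nondecreasing U_increasing).
  by rewrite max_cost_ge0 // addr_ge0.
exact: max_cost_succ.
Qed.

Lemma integral_value_range i a t l (F : R * discr E -> \bar R) : A i a -> 0 <= l ->
  (forall z, ~ instant z -> ((U (next_cost i a t l z))%:E <= F z <=
                              (Ubar (t + z.1) (next_cost i a t l z))%:E)%E) ->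
  ((U l)%:E <= \int[Q i a]_z F z <= (Ubar t l)%:E)%E.
Proof.
move=> Aa l0 Fb.
apply: (integral_bounded_ae (Q_setT Aa) (measurable_sojourn_le 0) (Q_sojourn0 Aa)).
by move=> z nz; apply: value_range_succ (Fb z nz).
Qed.

Lemma integral_sandwich n i a t l (F G : R * discr E -> \bar R) :
  A i a -> 0 <= l ->
  (forall z, ~ instant z -> sandwich (U (next_cost i a t l z))%:E
     (Ubar (t + z.1) (next_cost i a t l z))%:E
     (eps_n n (t + z.1) (next_cost i a t l z)) (F z) (G z)) ->
  sandwich (U l)%:E (Ubar t l)%:E (eps_n n.+1 t l)
    (\int[Q i a]_z F z) (\int[Q i a]_z G z).
Proof.
move=> Aa l0 FG.
have Fb z : ~ instant z -> ((U l)%:E <= F z <= (Ubar t l)%:E)%E.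
  move=> nz; apply: (value_range_succ Aa l0 nz).
  by case: (FG z nz) => -> FGz GU _; rewrite (le_trans FGz GU).
have Gb z : ~ instant z -> ((U l)%:E <= G z <= (Ubar t l)%:E)%E.
  move=> nz; apply: (value_range_succ Aa l0 nz).
  by case: (FG z nz) => UF FGz -> _; rewrite (le_trans UF FGz).
have mI := measurable_sojourn_le 0; have mS := measurable_sojourn_le delta.
have ed0 : 0 <= ed by exact: expR_ge0.
have ed1 : ed <= 1 by rewrite expR_le1 mulNr oppr_le0 mulr_ge0 // ltW.
split.
- by case/andP: (integral_bounded_ae (Q_setT Aa) mI (Q_sojourn0 Aa) Fb).
- apply: (le_integral_bounded_ae (Q_setT Aa) mI (Q_sojourn0 Aa) _ Fb Gb).
  by move=> z /FG[].
- by case/andP: (integral_bounded_ae (Q_setT Aa) mI (Q_sojourn0 Aa) Gb).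
- rewrite -eps_n_S.
  apply: (integral_le_add_indic (Q_setT Aa) mI (Q_sojourn0 Aa) mS (Q_short_sojourn Aa) _ _ _ Gb Fb).
  + by rewrite mulr_ge0 ?eps_n_ge0.
  + by rewrite mulr_ge0 ?eps_n_ge0 ?subr_ge0.
  move=> z nz; case: (FG z nz) => _ _ _ /le_trans; apply.
  rewrite leeD2l // lee_fin; apply: eps_n_succ => //; last exact: sojourn_gt0.
  by rewrite lerDl cost_incr_ge0 // ltW // sojourn_gt0.
Qed.

Lemma sandwich_U_Ubar t l : 0 <= l ->
  sandwich (U l)%:E (Ubar t l)%:E (eps_n 0 t l) (U l)%:E (Ubar t l)%:E.
Proof.
move=> l0; have Ul := U_le_Ubar t l0.
split; rewrite ?lee_fin //.
rewrite /Ubar /max_cost /eps_n expr0 mulr1 [_ + l]addrC.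
have -> : Uprime_minus U l * expR (- alpha * t) * (cbar / alpha) =
    Uprime_minus U l * (expR (- alpha * t) * cbar / alpha) by rewrite !mulrA.
exact/concave_le_tangent/discounted_cbar_ge0.
Qed.

Let TopQ := Top A Q C alpha.

Lemma Top_sandwich n (v w : R -> E -> R -> \bar R) :
  (forall t i l, 0 <= l ->
     sandwich (U l)%:E (Ubar t l)%:E (eps_n n t l) (v t i l) (w t i l)) ->
  forall t i l, 0 <= l ->
     sandwich (U l)%:E (Ubar t l)%:E (eps_n n.+1 t l) (TopQ v t i l) (TopQ w t i l).
Proof.
move=> vw t i l l0; apply: sandwich_ereal_inf (A_neq0 i) _ => a Aa.
apply: integral_sandwich => // z nz; have z0 := ltW (sojourn_gt0 nz).
by apply: vw; rewrite addr_ge0 // cost_incr_ge0.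
Qed.

Lemma iter_Top_sandwich n t i l : 0 <= l ->
  sandwich (U l)%:E (Ubar t l)%:E (eps_n n t l)
    (iter n TopQ (fun t i l => (U l)%:E) t i l) (iter n TopQ (fun t i l => (Ubar t l)%:E) t i l).
Proof.
elim: n t i l => [|n IH] t i l l0; first exact: sandwich_U_Ubar.
by rewrite !iterS; apply: Top_sandwich.
Qed.

Section policy.
Variable f : policy R E Act.
Hypothesis f_adm : admissible_policy A f.
Local Notation ev := (exp_val Q C alpha U f).

Lemma exp_val_range m k (h : hist R E Act k) : 0 <= h.2.2 ->
  ((U h.2.2)%:E <= ev m h <= (Ubar h.2.1.1 h.2.2)%:E)%E.
Proof.
elim: m k h => [|m IH] k h l0; first by rewrite /= lexx lee_fin U_le_Ubar.
have Aa := (f_adm k).2 h.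
apply: integral_value_range => // z nz; have z0 := ltW (sojourn_gt0 nz).
by apply: IH; rewrite /= addr_ge0 // cost_incr_ge0.
Qed.

Lemma exp_val_sandwich N m k (h : hist R E Act k) : 0 <= h.2.2 ->
  sandwich (U h.2.2)%:E (Ubar h.2.1.1 h.2.2)%:E (eps_n N h.2.1.1 h.2.2) (ev N h) (ev (N + m) h).
Proof.
elim: N m k h => [|N IH] m k h l0.
  have /andP[Uev evU] := exp_val_range m l0.
  case: (sandwich_U_Ubar h.2.1.1 l0) => _ _ _ UbarU.
  by split; rewrite //= (le_trans evU UbarU).
have Aa := (f_adm k).2 h.
rewrite addSn; apply: integral_sandwich => // z nz; have z0 := ltW (sojourn_gt0 nz).
by apply: IH; rewrite /= addr_ge0 // cost_incr_ge0.
Qed.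

Lemma EUCinf_sandwich n t i l : 0 <= l ->
  (EUCn Q C alpha U f n t i l <= EUCinf Q C alpha U f t i l <=
   EUCn Q C alpha U f n t i l + (eps_n n t l)%:E)%E.
Proof.
move=> l0; apply: limn_nondecreasing_shift; rewrite ?lee_fin ?eps_n_ge0 //.
- apply/nondecreasing_seqP => m; rewrite -addn1.
  by case: (@exp_val_sandwich m 1 _ (@init_hist R E Act t i l) l0).
- by move=> p; case: (@exp_val_sandwich n p _ (@init_hist R E Act t i l) l0).
Qed.

End policy.

Lemma V_inf_sandwich n t i l : 0 <= l ->
  (V_n A Q C alpha U n t i l <= V_inf A Q C alpha U t i l <=
   V_n A Q C alpha U n t i l + (eps_n n t l)%:E)%E.
Proof.
by move=> l0; apply: ereal_inf_shift => f f_adm; exact: EUCinf_sandwich.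
Qed.

End model.

Theorem mainTheorem5
  (R : realType) (E : pointedType) (Act : ptopologicalType)
  (A : E -> set Act)
  (Q : E -> Act -> {measure set (R * discr E)%type -> \bar R})
  (C : E -> Act -> R) (cbar alpha : R) (U : R -> R) (delta eps : R)
  (* countable state space *)
  (hE : countable [set: E])
  (* admissible action sets: nonempty, measurable *)
  (hA0 : forall i, A i !=set0)
  (hAm : forall i, measurable (A i : set (borelT Act)))
  (* semi-Markov kernel: probability on [0,oo) x E, no mass at sojourn time 0,
     measurable in the action *)
  (hQ1 : forall i a, A i a -> Q i a setT = 1%E)
  (hQ0 : forall i a, A i a -> Q i a ([set s : R | s <= 0] `*` setT) = 0%E)
  (hQm : forall i (B : set (R * discr E)%type), measurable B ->
           measurable_fun (A i : set (borelT Act)) (fun a : borelT Act => Q i a B))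
  (* bounded measurable cost, discount, utility *)
  (hcbar : 0 < cbar)
  (hC : forall i a, A i a -> 0 <= C i a <= cbar)
  (hCm : forall i, measurable_fun (A i : set (borelT Act)) (fun a : borelT Act => C i a))
  (halpha : 0 < alpha)
  (hUc : {within `[0, +oo[, continuous U})
  (hUi : {in `[0, +oo[ &, {mono U : x y / x < y}})
  (* Assumption 1 *)
  (hdelta : 0 < delta) (heps : 0 < eps)
  (hA1 : forall i a, A i a ->
           (Q i a ([set s : R | (s <= delta)%R] `*` setT) <= (1 - eps)%:E)%E)
  (* Assumption 2 *)
  (hAc : forall i, compact (A i))
  (hCc : forall i, {within A i, continuous (C i)})
  (hA2 : forall v : R -> E -> R -> R,
      measurable_fun setT (fun x : St R E => v x.1.1 x.1.2 x.2) ->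
      (forall t i l, 0 <= t -> 0 <= l ->
         U l <= v t i l <= U (expR (- alpha * t) * cbar / alpha + l)) ->
      forall t i l, 0 <= t -> 0 <= l ->
        {within A i, continuous (fun a : Act =>
           (\int[Q i a]_z (v (t + z.1) z.2 (l + cost_incr C alpha i a t z.1))%:E)%E)})
  (* U concave, U'(0) exists *)
  (hUconc : concave_on_nonneg U)
  (hU0 : cvg ((fun h : R => (U h - U 0) / h) @ 0^'+)) :
  let eps_n := fun (n : nat) (t l : R) =>
    Uprime_minus U l * expR (- alpha * t) * (cbar / alpha)
      * (1 - eps + eps * expR (- alpha * delta)) ^+ n in
  let Uv := fun (t : R) (i : E) (l : R) => (U l)%:E in
  let vbar := fun (t : R) (i : E) (l : R) =>
    (U (expR (- alpha * t) * cbar / alpha + l))%:E in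
  forall (n : nat) (t : R) (i : E) (l : R), 0 <= t -> 0 <= l ->
    ((V_n A Q C alpha U n t i l <= V_inf A Q C alpha U t i l)%E /\
     (V_inf A Q C alpha U t i l <= V_n A Q C alpha U n t i l + (eps_n n t l)%:E)%E) /\
    ((0 <= iter n (Top A Q C alpha) vbar t i l - iter n (Top A Q C alpha) Uv t i l)%E /\
     (iter n (Top A Q C alpha) vbar t i l - iter n (Top A Q C alpha) Uv t i l
        <= (eps_n n t l)%:E)%E).
Proof.
move=> eps_n Uv vbar n t i l _ l0.
split; apply/andP.
  exact: (V_inf_sandwich hA0 hQ1 hQ0 hcbar hC halpha hUi hdelta heps hA1 hUconc hU0 n t i l0).
apply: sandwich_sub.
exact: (iter_Top_sandwich hA0 hQ1 hQ0 hcbar hC halpha hUi hdelta heps hA1 hUconc hU0 n t i l0).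
Qed.
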